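(* Let $(T_1,T_2)$ be a commuting pair of strict contractions ($\|T_1\|<1$, $\|T_2\|<1$) on a complex Banach space $\mathbb X$ such that for $i=1,2$ the function $A_{T_i}(x)=(\|x\|^2-\|T_ix\|^2)^{1/2}$ defines a norm on $\mathbb X$, and let $\mathbb X_i=(\mathbb X,A_{T_i})$. Suppose there is a unitary $S:\mathbb X_1\oplus_2\mathbb X_2\to\mathbb X_1\oplus_2\mathbb X_2$ with $$S(T_2x,x)=(x,T_1x)\quad\text{for all }x\in\mathbb X.$$ Then $(T_1,T_2)$ admits a minimal isometric dilation on the Banach space $\widetilde{\mathbb X}=\mathbb X\oplus_2\ell_2(\mathbb X_1\oplus_2\mathbb X_2)$; i.e. there are commuting linear isometries $V_1,V_2$ on $\widetilde{\mathbb X}$ with $P_{\mathbb X}V_1^{s_1}V_2^{s_2}x=T_1^{s_1}T_2^{s_2}x$ for all $x\in\mathbb X$, $s_1,s_2\in\mathbb N\cup\{0\}$, and $\widetilde{\mathbb X}=\overline{\operatorname{span}}\{V_1^{s_1}V_2^{s_2}x:x\in\mathbb X,\ s_1,s_2\in\mathbb N\cup\{0\}\}$.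
   Context: $A_T(x)=(\|x\|^2-\|Tx\|^2)^{1/2}$ for a contraction $T$; ''$A_T$ defines a norm'' means it is a norm on $\mathbb X$, and $(\mathbb X,A_T)$ is $\mathbb X$ with this norm. $\oplus_2$ denotes the direct $2$-sum, with norm $\|(x_1,x_2)\|=(\|x_1\|^2+\|x_2\|^2)^{1/2}$; $\ell_2(\mathbb Y)$ is the space of square-summable sequences in $\mathbb Y$ with norm $(\sum\|y_n\|^2)^{1/2}$. $\mathbb X$ is identified with $\{(x,\mathbf 0,\mathbf 0,\dots)\}\subseteq\widetilde{\mathbb X}$ and $P_{\mathbb X}(x,(x_1,x_2),\dots)=x$. A unitary is a surjective linear isometry. *)

From HB Require Import structures.
From mathcomp Require Import all_boot all_order all_algebra.
From mathcomp Require Import all_classical all_reals all_analysis.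
From mathcomp Require Import complex.
Import Order.TTheory GRing.Theory Num.Theory.
Import numFieldNormedType.Exports.
Set Implicit Arguments.
Unset Strict Implicit.
Unset Printing Implicit Defensive.
Local Open Scope ring_scope.
Local Open Scope complex_scope.

(* real-valued norm ||x|| (the norm of a normedModType over R[i] takes values
   in R[i]; it is real, we take its real part) *)
Definition rnorm (R : realType) (V : normedModType R[i]) (x : V) : R :=
  complex.Re `|x|.

Definition opnorm (R : realType) (V : normedModType R[i]) (T : V -> V) : \bar R :=
  ereal_sup [set ((rnorm (T x))%:E)%E | x in [set x : V | rnorm x <= 1]].

Definition strict_contraction (R : realType) (V : normedModType R[i])
  (T : V -> V) : Prop := (opnorm T < 1%:E)%E.

Definition A_ (R : realType) (V : normedModType R[i]) (T : V -> V) (x : V) : R :=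
  Num.sqrt (rnorm x ^+ 2 - rnorm (T x) ^+ 2).

Definition is_norm (R : realType) (V : normedModType R[i]) (f : V -> R) : Prop :=
  [/\ (forall x, 0 <= f x),
      (forall x, f x = 0 -> x = 0),
      (forall (a : R[i]) x, f (a *: x) = complex.Re `|a| * f x) &
      (forall x y, f (x + y) <= f x + f y)].

(* norm of X_1 (+)_2 X_2, where X_i = (X, A_{T_i}) *)
Definition norm12 (R : realType) (V : normedModType R[i]) (T1 T2 : V -> V)
  (p : (V * V)%type) : R :=
  Num.sqrt (A_ T1 p.1 ^+ 2 + A_ T2 p.2 ^+ 2).

Definition unitary12 (R : realType) (V : normedModType R[i]) (T1 T2 : V -> V)
  (S : {linear (V * V)%type -> (V * V)%type}) : Prop :=
  (forall p, norm12 T1 T2 (S p) = norm12 T1 T2 p) /\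
  (forall q, exists p, S p = q).

(* Ambient carrier of Xtilde = X (+)_2 l_2(X_1 (+)_2 X_2):
   pairs (x, (y_n)_n) with y_n in X_1 (+)_2 X_2. *)
Definition Xamb (R : realType) (V : normedModType R[i]) : lmodType R[i] :=
  (V * (nat -> V * V))%type.

Definition l2sq (R : realType) (V : normedModType R[i]) (T1 T2 : V -> V)
  (u : nat -> (V * V)%type) : \bar R :=
  (\sum_(0 <= n <oo) ((norm12 T1 T2 (u n)) ^+ 2)%:E)%E.

Definition inXt (R : realType) (V : normedModType R[i]) (T1 T2 : V -> V)
  (z : Xamb V) : Prop := (l2sq T1 T2 z.2 < +oo)%E.

Definition normXt (R : realType) (V : normedModType R[i]) (T1 T2 : V -> V)
  (z : Xamb V) : R :=
  Num.sqrt (rnorm z.1 ^+ 2 + fine (l2sq T1 T2 z.2)).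

Definition embX (R : realType) (V : normedModType R[i]) (x : V) : Xamb V :=
  (x, fun _ => (0, 0)).

Definition PX (R : realType) (V : normedModType R[i]) (z : Xamb V) : V := z.1.

Definition minimal_isometric_dilation (R : realType) (V : normedModType R[i])
  (T1 T2 : V -> V) (V1 V2 : Xamb V -> Xamb V) : Prop :=
      (forall z, inXt T1 T2 z -> inXt T1 T2 (V1 z) /\ inXt T1 T2 (V2 z)) /\
      (forall (a : R[i]) z w, inXt T1 T2 z -> inXt T1 T2 w ->
         V1 (a *: z + w) = a *: V1 z + V1 w /\
         V2 (a *: z + w) = a *: V2 z + V2 w) /\
      (forall z, inXt T1 T2 z ->
         normXt T1 T2 (V1 z) = normXt T1 T2 z /\
         normXt T1 T2 (V2 z) = normXt T1 T2 z) /\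
      (forall z, inXt T1 T2 z -> V1 (V2 z) = V2 (V1 z)) /\
      (forall (x : V) (s1 s2 : nat),
         PX (iter s1 V1 (iter s2 V2 (embX x))) = iter s1 T1 (iter s2 T2 x)) /\
      (* minimality: closed span of {V1^s1 V2^s2 x} is all of Xtilde *)
      (forall z, inXt T1 T2 z -> forall eps : R, 0 < eps ->
         exists (n : nat) (c : 'I_n -> R[i]) (xs : 'I_n -> V) (s1 s2 : 'I_n -> nat),
           normXt T1 T2
             (z - \sum_(i < n) c i *: iter (s1 i) V1 (iter (s2 i) V2 (embX (xs i))))
           < eps).

From HB Require Import structures.
From mathcomp Require Import all_boot all_order all_algebra.
From mathcomp Require Import all_classical all_reals all_analysis.
From mathcomp Require Import complex.
Import Order.TTheory GRing.Theory Num.Theory.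
Import numFieldNormedType.Exports.
Set Implicit Arguments.
Unset Strict Implicit.
Unset Printing Implicit Defensive.
Local Open Scope ring_scope.
Local Open Scope complex_scope.

(* V1 applies T1 to the X-coordinate and stores the defect of T1 in the
   l2-part, which is rotated by S:
     V1 (x, (y_n)) = (T1 x, (x, (S y_0).2), ((S y_0).1, (S y_1).2), ...),
   so ||V1 z||^2 = ||T1 x||^2 + A_T1(x)^2 + sum ||y_n||^2 = ||z||^2;
   V2 is built the same way from S^-1 and T2.  The intertwining
   S (T2 x, x) = (x, T1 x) makes V1 V2 and V2 V1 both equal to the shift
   (x, y) |-> (T1 T2 x, ((T2 x, x), y_0, y_1, ...)).  For minimality, the
   vectors supported on the first slot of the l2-part are combinations of
   V1 a - T1 a and V1 V2 b - V1 T2 b; the shift carries them to every slot, so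
   the span contains all finitely supported vectors, which are dense. *)

Section RealNorm.
Variables (R : realType) (X : normedModType R[i]).

Lemma rnormE (x : X) : `|x| = (rnorm x)%:C.
Proof.
have := normr_ge0 x; rewrite /rnorm.
move: (`|x|) => z; rewrite lecE /= => /andP[/eqP z_real _].
by apply/eqP; rewrite eq_complex /= -z_real !eqxx.
Qed.

Lemma rnorm_ge0 (x : X) : 0 <= rnorm x.
Proof. by have := normr_ge0 x; rewrite rnormE lecR. Qed.

Lemma rnorm0 : rnorm (0 : X) = 0.
Proof. by rewrite /rnorm normr0. Qed.

Lemma rnorm_eq0 (x : X) : rnorm x = 0 -> x = 0.
Proof. by move=> x0; apply/normr0_eq0; rewrite rnormE x0. Qed.

Lemma rnormZ_ge0 (r : R) (x : X) : 0 <= r -> rnorm (r%:C *: x) = r * rnorm x.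
Proof.
move=> r_ge0; rewrite /rnorm normrZ normc_def rnormE /= expr0n /= addr0.
by rewrite sqrtr_sqr ger0_norm // !mul0r subr0.
Qed.

Lemma strict_contraction_le (T : {linear X -> X}) : strict_contraction T ->
  forall x, rnorm (T x) <= rnorm x.
Proof.
move=> hT x; have [->|x_neq0] := eqVneq x 0; first by rewrite linear0 rnorm0.
have x_gt0 : 0 < rnorm x.
  by rewrite lt_def rnorm_ge0 andbT; apply: contra_neq x_neq0; apply: rnorm_eq0.
pose y := ((rnorm x)^-1)%:C *: x.
have y_unit : rnorm y = 1 by rewrite rnormZ_ge0 ?invr_ge0 ?ltW // mulVf // gt_eqF.
have Ty_lt1 : rnorm (T y) < 1.
  rewrite -lte_fin; apply: le_lt_trans hT.
  by apply: ereal_sup_ubound; exists y => //=; rewrite y_unit.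
by apply: ltW; move: Ty_lt1; rewrite linearZ rnormZ_ge0 ?invr_ge0 ?ltW //
  mulrC ltr_pdivrMr // mul1r.
Qed.

Lemma A_0 (T : {linear X -> X}) : A_ T 0 = 0.
Proof. by rewrite /A_ linear0 rnorm0 expr0n /= subrr sqrtr0. Qed.

Lemma sqr_A (T : {linear X -> X}) : strict_contraction T ->
  forall x, A_ T x ^+ 2 = rnorm x ^+ 2 - rnorm (T x) ^+ 2.
Proof.
move=> hT x; rewrite /A_ sqr_sqrtr // subr_ge0 lerXn2r ?nnegrE ?rnorm_ge0 //.
exact: strict_contraction_le.
Qed.

Lemma sqr_norm12 (T1 T2 : X -> X) p :
  norm12 T1 T2 p ^+ 2 = A_ T1 p.1 ^+ 2 + A_ T2 p.2 ^+ 2.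
Proof. by rewrite /norm12 sqr_sqrtr // addr_ge0 // sqr_ge0. Qed.

Lemma norm12_0 (T1 T2 : {linear X -> X}) : norm12 T1 T2 0 = 0.
Proof. by rewrite /norm12 /= !A_0 expr0n /= addr0 sqrtr0. Qed.

Lemma norm12_eq0 (T1 T2 : X -> X) : is_norm (A_ T1) -> is_norm (A_ T2) ->
  forall p, norm12 T1 T2 p = 0 -> p = 0.
Proof.
move=> [_ A1_eq0 _ _] [_ A2_eq0 _ _] [a b] p0.
have /eqP : norm12 T1 T2 (a, b) ^+ 2 = 0 by rewrite p0 expr0n.
rewrite sqr_norm12 paddr_eq0 ?sqr_ge0 // !sqrf_eq0 /=.
by case/andP=> /eqP/A1_eq0 -> /eqP/A2_eq0 ->.
Qed.

Lemma l2sq_ge0 (T1 T2 : X -> X) u : (0 <= l2sq T1 T2 u)%E.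
Proof. by apply: nneseries_ge0 => n _ _; rewrite lee_fin sqr_ge0. Qed.

End RealNorm.

Lemma nneseries_stagger (R : realType) (A : R) (a b g : nat -> R) : 0 <= A ->
  (forall n, 0 <= a n) -> (forall n, 0 <= b n) ->
  g 0%N = A + b 0%N -> (forall k, g k.+1 = a k + b k.+1) ->
  (\sum_(0 <= n <oo) (g n)%:E = A%:E + \sum_(0 <= n <oo) (a n + b n)%:E)%E.
Proof.
move=> A_ge0 a_ge0 b_ge0 g0 gS.
pose h n := if n is k.+1 then (a k)%:E else A%:E.
have h_ge0 n : (0 <= h n)%E by case: n => [|n]; rewrite /h lee_fin.
rewrite (@eq_eseriesr _ _ (fun n => h n + (b n)%:E)%E); last first.
  by case=> [|k] _; rewrite ?g0 ?gS EFinD.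
rewrite nneseriesD //; last by move=> i _ _; rewrite lee_fin.
rewrite (@eq_eseriesr _ (fun n => (a n + b n)%:E) (fun n => (a n)%:E + (b n)%:E)%E);
  last by move=> i _; rewrite EFinD.
rewrite [X in (_ = _ + X)%E]nneseriesD; last 2 first.
- by move=> i _ _; rewrite lee_fin.
- by move=> i _ _; rewrite lee_fin.
rewrite addeA nneseries_recl // -(nneseries_addn 1) //.
by congr (_ + _ + _)%E; apply: eq_eseriesr => i _; rewrite addn1.
Qed.

Lemma pairD (A B : nmodType) (a b : A) (c d : B) :
  ((a, c) + (b, d) : (A * B)%type) = (a + b, c + d).
Proof. by []. Qed.

Lemma pairN (A B : zmodType) (a : A) (c : B) :
  (- (a, c) : (A * B)%type) = (- a, - c).
Proof. by []. Qed.

Section Dilation.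
Variables (R : realType) (X : normedModType R[i]) (T1 T2 : {linear X -> X}).
Hypotheses (hT1 : strict_contraction T1) (hT2 : strict_contraction T2).
Hypothesis hcomm : forall x, T1 (T2 x) = T2 (T1 x).
Hypotheses (hA1 : is_norm (A_ T1)) (hA2 : is_norm (A_ T2)).
Variable S : {linear (X * X)%type -> (X * X)%type}.
Hypothesis hS : unitary12 T1 T2 S.
Hypothesis hST : forall x : X, S (T2 x, x) = (x, T1 x).
Variable Sinv : (X * X)%type -> (X * X)%type.
Hypothesis SinvK : cancel Sinv S.

Local Notation norm12 := (norm12 T1 T2).
Local Notation l2sq := (l2sq T1 T2).
Local Notation inXt := (inXt T1 T2).
Local Notation normXt := (normXt T1 T2).

Lemma S_inj : injective S.
Proof.
move=> p q Spq; apply/eqP; rewrite -subr_eq0; apply/eqP.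
apply: (norm12_eq0 hA1 hA2).
by rewrite -hS.1 linearB Spq subrr norm12_0.
Qed.

Lemma SK : cancel S Sinv.
Proof. by move=> p; apply: S_inj; rewrite SinvK. Qed.

Lemma Sinv_linear : linear Sinv.
Proof. by move=> a p q; apply: S_inj; rewrite SinvK linearP !SinvK. Qed.

Lemma norm12_Sinv q : norm12 (Sinv q) = norm12 q.
Proof. by rewrite -{2}(SinvK q) hS.1. Qed.

Definition V1 (z : Xamb X) : Xamb X :=
  (T1 z.1, fun n => if n is k.+1 then ((S (z.2 k)).1, (S (z.2 k.+1)).2)
                    else (z.1, (S (z.2 0%N)).2)).

Definition V2 (z : Xamb X) : Xamb X :=
  (T2 z.1, fun n => if n is k.+1 then Sinv ((z.2 k.+1).1, (z.2 k).2)
                    else Sinv ((z.2 0%N).1, z.1)).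

Lemma V1_linear : linear V1.
Proof.
move=> a z w; rewrite /V1 /=; congr pair; first by rewrite linearP.
by apply: funext => -[|k] /=; rewrite !fctE /= ?linearP.
Qed.

Lemma V2_linear : linear V2.
Proof.
move=> a z w; rewrite /V2 /=; congr pair; first by rewrite linearP.
by apply: funext => -[|k] /=; rewrite !fctE /= -Sinv_linear.
Qed.

HB.instance Definition _ :=
  GRing.isLinear.Build R[i] (Xamb X) (Xamb X) _ V1 V1_linear.
HB.instance Definition _ :=
  GRing.isLinear.Build R[i] (Xamb X) (Xamb X) _ V2 V2_linear.

Lemma l2sq_V1 z : l2sq (V1 z).2 = (A_ T1 z.1 ^+ 2)%:E + l2sq z.2.
Proof.
rewrite /l2sq (@nneseries_stagger _ (A_ T1 z.1 ^+ 2)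
  (fun n => A_ T1 (S (z.2 n)).1 ^+ 2) (fun n => A_ T2 (S (z.2 n)).2 ^+ 2)).
- by congr (_ + _)%E; apply: eq_eseriesr => n _; rewrite -sqr_norm12 hS.1.
- exact: sqr_ge0.
- by move=> n; apply: sqr_ge0.
- by move=> n; apply: sqr_ge0.
- by rewrite sqr_norm12.
- by move=> k; rewrite sqr_norm12.
Qed.

Lemma l2sq_V2 z : l2sq (V2 z).2 = (A_ T2 z.1 ^+ 2)%:E + l2sq z.2.
Proof.
rewrite /l2sq (@nneseries_stagger _ (A_ T2 z.1 ^+ 2)
  (fun n => A_ T2 (z.2 n).2 ^+ 2) (fun n => A_ T1 (z.2 n).1 ^+ 2)).
- by congr (_ + _)%E; apply: eq_eseriesr => n _; rewrite sqr_norm12 addrC.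
- exact: sqr_ge0.
- by move=> n; apply: sqr_ge0.
- by move=> n; apply: sqr_ge0.
- by rewrite /= norm12_Sinv sqr_norm12 addrC.
- by move=> k; rewrite /= norm12_Sinv sqr_norm12 addrC.
Qed.

Lemma isometry_of_defect (T : {linear X -> X}) : strict_contraction T ->
  forall z w, inXt z -> w.1 = T z.1 ->
  l2sq w.2 = (A_ T z.1 ^+ 2)%:E + l2sq z.2 ->
  inXt w /\ normXt w = normXt z.
Proof.
move=> hT z w z_in w1 w2.
have l2z_fin : l2sq z.2 = (fine (l2sq z.2))%:E.
  by rewrite fineK // ge0_fin_numE // l2sq_ge0.
rewrite /inXt /normXt w2 l2z_fin w1 -EFinD /=; split; first exact: ltry.
by rewrite sqr_A // addrA [X in X + _]addrC subrK.
Qed.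

Lemma V1_isometry z : inXt z -> inXt (V1 z) /\ normXt (V1 z) = normXt z.
Proof.
by move=> z_in; apply: (isometry_of_defect hT1 z_in) => //; rewrite l2sq_V1.
Qed.

Lemma V2_isometry z : inXt z -> inXt (V2 z) /\ normXt (V2 z) = normXt z.
Proof.
by move=> z_in; apply: (isometry_of_defect hT2 z_in) => //; rewrite l2sq_V2.
Qed.

Definition shift12 (z : Xamb X) : Xamb X :=
  (T1 (T2 z.1), fun n => if n is k.+1 then z.2 k else (T2 z.1, z.1)).

Lemma V1V2E z : V1 (V2 z) = shift12 z.
Proof.
rewrite /V1 /V2 /shift12 /=; congr pair; apply: funext => -[|[|k]] /=;
  by rewrite !SinvK //; case: (z.2 _).
Qed.

Lemma V2V1E z : V2 (V1 z) = shift12 z.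
Proof.
rewrite /V1 /V2 /shift12 /=; congr pair; first by rewrite hcomm.
apply: funext => -[|[|k]] /=; first by rewrite -hST SK.
all: by rewrite -surjective_pairing SK.
Qed.

Lemma V1V2C z : V1 (V2 z) = V2 (V1 z).
Proof. by rewrite V1V2E V2V1E. Qed.

Lemma iter_V2C s z : V2 (iter s V1 z) = iter s V1 (V2 z).
Proof. by elim: s => [|s IH] //=; rewrite -V1V2C IH. Qed.

Lemma iter_V_fst s1 s2 z :
  (iter s1 V1 (iter s2 V2 z)).1 = iter s1 T1 (iter s2 T2 z.1).
Proof. by elim: s1 => [|s1 /= ->]; first by elim: s2 => [|s2 /= ->]. Qed.

Definition span_term (t : R[i] * X * nat * nat) : Xamb X :=
  t.1.1.1 *: iter t.1.2 V1 (iter t.2 V2 (embX t.1.1.2)).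

Definition in_span (w : Xamb X) : Prop := exists l, w = \sum_(t <- l) span_term t.

Lemma in_spanD w1 w2 : in_span w1 -> in_span w2 -> in_span (w1 + w2).
Proof. by move=> [l1 ->] [l2 ->]; exists (l1 ++ l2); rewrite big_cat. Qed.

Lemma in_span_term t : in_span (span_term t).
Proof. by exists [:: t]; rewrite big_seq1. Qed.

Lemma in_span_shift12 w : in_span w -> in_span (shift12 w).
Proof.
move=> [l ->]; rewrite -V1V2E.
exists [seq (t.1.1, t.1.2.+1, t.2.+1) | t <- l]; rewrite big_map !linear_sum.
by apply: eq_bigr => t _; rewrite /span_term !linearZ /= iter_V2C.
Qed.

Definition delta (k : nat) (e : X * X) : nat -> X * X :=
  fun n => if n == k then e else 0.

Lemma in_span_delta0 e : in_span ((0, delta 0 e) : Xamb X).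
Proof.
case: e => a b.
(* (V1 a - T1 a) and (V1 V2 b - V1 T2 b) fill the two halves of slot 0 *)
have -> : ((0, delta 0 (a, b)) : Xamb X) =
  span_term (1, a, 1%N, 0%N) + span_term (-1, T1 a, 0%N, 0%N)
  + span_term (1, b, 1%N, 1%N) + span_term (-1, T2 b, 1%N, 0%N).
  rewrite /span_term /= !scale1r !scaleN1r V1V2E /V1 /shift12 /embX /=.
  rewrite linear0 !pairN !pairD; congr pair; first by rewrite subrr add0r subrr.
  apply: funext => -[|n]; rewrite /= !fctE /delta /=.
    by rewrite !pairN !pairD; congr pair; rewrite ?subr0 ?addrK // ?add0r.
  by rewrite !subrr add0r subrr.
by do 3 (apply: in_spanD; last exact: in_span_term); exact: in_span_term.
Qed.

Lemma in_span_delta k e : in_span ((0, delta k e) : Xamb X).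
Proof.
elim: k => [|k IH]; first exact: in_span_delta0.
have -> : ((0, delta k.+1 e) : Xamb X) = shift12 (0, delta k e).
  by rewrite /shift12 /= !linear0; congr pair; apply: funext => -[|n].
exact: in_span_shift12.
Qed.

Definition trunc (N : nat) (u : nat -> X * X) : nat -> X * X :=
  fun n => if (n < N)%N then u n else 0.

Lemma in_span_trunc (z : Xamb X) N : in_span ((z.1, trunc N z.2) : Xamb X).
Proof.
elim: N => [|N IH].
  have -> : ((z.1, trunc 0 z.2) : Xamb X) = span_term (1, z.1, 0%N, 0%N).
    by rewrite /span_term scale1r.
  exact: in_span_term.
have -> : ((z.1, trunc N.+1 z.2) : Xamb X) =
    (z.1, trunc N z.2) + (0, delta N (z.2 N)).
  rewrite pairD addr0; congr pair; apply: funext => n.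
  by rewrite fctE /trunc /delta ltnS; case: ltngtP => [||->]; rewrite ?addr0 ?add0r.
exact: in_spanD IH (in_span_delta _ _).
Qed.

Lemma normXt_sub_trunc (z : Xamb X) N :
  normXt (z - (z.1, trunc N z.2)) =
  Num.sqrt (fine (\sum_(N <= k <oo) (norm12 (z.2 k) ^+ 2)%:E)%E).
Proof.
have tailE : z - ((z.1, trunc N z.2) : Xamb X) =
    (0, fun n => if (n < N)%N then 0 else z.2 n).
  case: z => x u; rewrite pairN pairD subrr; congr pair.
  by apply: funext => n; rewrite !fctE /trunc /=; case: ifP; rewrite ?subrr ?subr0.
rewrite tailE /normXt /= rnorm0 expr0n add0r /l2sq.
rewrite (nneseries_split 0 N); last by move=> k _; rewrite lee_fin sqr_ge0.
rewrite add0n big_nat big1 ?add0e; last first.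
  by move=> k /andP[_ ->]; rewrite norm12_0 expr0n.
rewrite -!(@nneseries_addn _ _ N) => [||i]; last by rewrite lee_fin sqr_ge0.
  by congr (Num.sqrt (fine _)); apply: eq_eseriesr => i _; rewrite ltnNge leq_addl.
by move=> i; rewrite lee_fin sqr_ge0.
Qed.

Lemma trunc_approx (z : Xamb X) (eps : R) : inXt z -> 0 < eps ->
  exists N, normXt (z - (z.1, trunc N z.2)) < eps.
Proof.
move=> z_in eps_gt0.
have := @nneseries_tail_cvg R (fun n => (norm12 (z.2 n) ^+ 2)%:E) xpredT z_in.
move=> /(_ (fun k _ => sqr_ge0 _))/fine_cvgP[_].
move=> /cvgrPdist_lt /(_ (eps ^+ 2) (exprn_gt0 2 eps_gt0)) [N _ tail_small].
exists N; have := tail_small N (leqnn N); rewrite /= sub0r normrN => tail_lt.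
rewrite normXt_sub_trunc -(gtr0_norm eps_gt0) -sqrtr_sqr.
rewrite ltr_sqrt ?exprn_gt0 ?normr_gt0 ?gt_eqF //.
exact: le_lt_trans (ler_norm _) tail_lt.
Qed.

Lemma V_minimal_isometric_dilation : minimal_isometric_dilation T1 T2 V1 V2.
Proof.
split; [|split; [|split; [|split; [|split]]]].
- by move=> z z_in; split; [case: (V1_isometry z_in)|case: (V2_isometry z_in)].
- by move=> a z w _ _; rewrite !linearP.
- by move=> z z_in; split; [case: (V1_isometry z_in)|case: (V2_isometry z_in)].
- by move=> z _; exact: V1V2C.
- by move=> x s1 s2; rewrite /PX iter_V_fst.
move=> z z_in eps eps_gt0.
have [N approx] := trunc_approx z_in eps_gt0.
have [l l_sum] := in_span_trunc z N.
pose t0 : R[i] * X * nat * nat := (0, 0, 0%N, 0%N).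
exists (size l), (fun i => (nth t0 l i).1.1.1), (fun i => (nth t0 l i).1.1.2),
  (fun i => (nth t0 l i).1.2), (fun i => (nth t0 l i).2).
suff -> : \sum_(i < size l) span_term (nth t0 l i) = \sum_(t <- l) span_term t.
  by rewrite -l_sum.
by rewrite (big_nth t0) big_mkord.
Qed.

End Dilation.

Theorem theorem2p3 (R : realType) (X : completeNormedModType R[i])
  (T1 T2 : {linear X -> X})
  (hT1 : strict_contraction T1) (hT2 : strict_contraction T2)
  (hcomm : forall x, T1 (T2 x) = T2 (T1 x))
  (hA1 : is_norm (A_ T1)) (hA2 : is_norm (A_ T2))
  (S : {linear (X * X)%type -> (X * X)%type})
  (hS : unitary12 T1 T2 S)
  (hST : forall x : X, S (T2 x, x) = (x, T1 x)) :
  exists V1 V2 : Xamb X -> Xamb X, minimal_isometric_dilation T1 T2 V1 V2.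
Proof.
have [Sinv SinvK] := boolp.choice hS.2.
exists (V1 T1 S), (V2 T2 Sinv).
by apply: V_minimal_isometric_dilation.
Qed.
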